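(* Let $\Phi_\beta$ ($\beta\ge0$) be as in Assumption F2 and let $\Pi_\Phi=\{i: s_i\ne0\}$. Let $0\le\beta_1<\beta_0$, let $y$ be any minimizer of $\Phi_{\beta_1}$ and $z$ any minimizer of $\Phi_{\beta_0}$ over $\{0,1\}^n$. Then $H(y)\cap\Pi_\Phi\supseteq H(z)\cap\Pi_\Phi$.
   Context: Assumption F2: for $\beta\ge0$, $\Phi_\beta(x)=-\sum_{1\le i<j\le n}a_{i,j}x_ix_j+\beta\sum_{i=1}^n s_ix_i$ on $x\in\{0,1\}^n$, where all $a_{i,j}\ge0$ and all $s_i\ge0$ are rationals. $H(x)=\{i:x_i=1\}$. *)

From mathcomp Require Import all_boot all_order all_algebra.
Set Implicit Arguments. Unset Strict Implicit. Unset Printing Implicit Defensive.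
Import Order.TTheory GRing.Theory Num.Theory.
Local Open Scope ring_scope.

(* Assumption F2: points x in {0,1}^n are boolean finite functions on 'I_n;
   x_i = 1 iff x i = true. *)
Definition bval (R : pzRingType) (b : bool) : R := if b then 1 else 0.

Definition Phi (R : realFieldType) (n : nat) (a : 'I_n -> 'I_n -> rat)
  (s : 'I_n -> rat) (beta : R) (x : {ffun 'I_n -> bool}) : R :=
  - (\sum_(i < n) \sum_(j < n | (i < j)%N) ratr (a i j) * bval R (x i) * bval R (x j))
  + beta * \sum_(i < n) ratr (s i) * bval R (x i).

Definition Hset (n : nat) (x : {ffun 'I_n -> bool}) : {set 'I_n} := [set i | x i].

Definition PiPhi (n : nat) (s : 'I_n -> rat) : {set 'I_n} := [set i | s i != 0].

From mathcomp Require Import all_boot all_order all_algebra.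
From mathcomp Require Import lra.
Import Order.TTheory GRing.Theory Num.Theory.
Set Implicit Arguments. Unset Strict Implicit. Unset Printing Implicit Defensive.
Local Open Scope ring_scope.

(* Write Phi_beta = -Q + beta L.  With a >= 0 the quadratic part Q is
   supermodular and the linear part L is modular under the pointwise join and
   meet of {0,1}-vectors.  Comparing Phi_beta1(y) with Phi_beta1(y \/ z) and
   Phi_beta0(z) with Phi_beta0(y /\ z) and adding, the Q-terms cancel in the
   right direction and leave (beta0 - beta1) (L z - L (y /\ z)) <= 0.  Since
   s >= 0, L z - L (y /\ z) is a sum of the nonnegative s_i over i in
   H(z) \ H(y), so every such s_i vanishes. *)

Lemma bvalM_or_and_ge (R : realFieldType) (b1 b2 c1 c2 : bool) :
  bval R b1 * bval R b2 + bval R c1 * bval R c2 <=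
  bval R (b1 || c1) * bval R (b2 || c2) + bval R (b1 && c1) * bval R (b2 && c2).
Proof. by case: b1; case: b2; case: c1; case: c2; rewrite /bval /=; lra. Qed.

Lemma bvalD_or_and (R : realFieldType) (b c : bool) :
  bval R (b || c) + bval R (b && c) = bval R b + bval R c.
Proof. by case: b; case: c; rewrite /bval /=; lra. Qed.

Definition ffun_or n (x y : {ffun 'I_n -> bool}) := [ffun i => x i || y i].
Definition ffun_and n (x y : {ffun 'I_n -> bool}) := [ffun i => x i && y i].

Section Decomposition.

Variables (R : realFieldType) (n : nat) (a : 'I_n -> 'I_n -> rat) (s : 'I_n -> rat).

Definition Phi_quad (x : {ffun 'I_n -> bool}) : R :=
  \sum_(i < n) \sum_(j < n | (i < j)%N) ratr (a i j) * bval R (x i) * bval R (x j).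

Definition Phi_lin (x : {ffun 'I_n -> bool}) : R :=
  \sum_(i < n) ratr (s i) * bval R (x i).

Lemma PhiE (beta : R) x : Phi a s beta x = - Phi_quad x + beta * Phi_lin x.
Proof. by []. Qed.

Lemma Phi_quad_supermodular x y :
  (forall i j : 'I_n, (i < j)%N -> 0 <= a i j) ->
  Phi_quad x + Phi_quad y <= Phi_quad (ffun_or x y) + Phi_quad (ffun_and x y).
Proof.
move=> ha; rewrite /Phi_quad -!big_split; apply: ler_sum => i _.
rewrite -!big_split; apply: ler_sum => j ij; rewrite !ffunE.
have : 0 <= ratr (a i j) :> R by rewrite ler0q ha.
(* [/=] unfolds the monoid law left by [big_split]; generalizing the
   coefficient first keeps it from also unfolding [ratr]. *)
move: (ratr (a i j)) => c c_ge0 /=; rewrite -!mulrA -!mulrDr.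
exact: ler_wpM2l (bvalM_or_and_ge _ _ _ _ _).
Qed.

Lemma Phi_lin_modular x y :
  Phi_lin (ffun_or x y) + Phi_lin (ffun_and x y) = Phi_lin x + Phi_lin y.
Proof.
rewrite /Phi_lin -!big_split; apply: eq_bigr => i _.
by rewrite !ffunE; move: (ratr (s i)) => c /=; rewrite -!mulrDr bvalD_or_and.
Qed.

Lemma minimizers_Phi_lin_le_and (beta1 beta0 : R) y z :
  (forall i j : 'I_n, (i < j)%N -> 0 <= a i j) -> beta1 < beta0 ->
  (forall x, Phi a s beta1 y <= Phi a s beta1 x) ->
  (forall x, Phi a s beta0 z <= Phi a s beta0 x) ->
  Phi_lin z <= Phi_lin (ffun_and y z).
Proof.
move=> ha hb10 hy hz.
have := hy (ffun_or y z); have := hz (ffun_and y z); rewrite !PhiE.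
have := Phi_quad_supermodular y z ha; have := Phi_lin_modular y z.
set Lz := Phi_lin z; set Lw := Phi_lin (ffun_and y z) => hL hQ h0 h1.
have : (beta0 - beta1) * (Lz - Lw) <= 0 by rewrite mulrBl !mulrBr; nra.
by rewrite pmulr_rle0 ?subr_gt0 // subr_le0.
Qed.

Lemma Phi_lin_le_and_support y z i :
  (forall i, 0 <= s i) -> Phi_lin z <= Phi_lin (ffun_and y z) ->
  z i -> s i != 0 -> y i.
Proof.
move=> hs hle zi si; apply/negPn/negP => yi.
have term_ge0 j : true -> 0 <= ratr (s j) * (bval R (z j) - bval R (ffun_and y z j)) :> R.
  move=> _; rewrite ffunE mulr_ge0 ?ler0q //.
  by case: (y j); case: (z j); rewrite /bval /=; lra.
have sum_eq0 : \sum_(j < n) ratr (s j) * (bval R (z j) - bval R (ffun_and y z j)) = 0 :> R.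
  apply/eqP; rewrite eq_le sumr_ge0 // andbT.
  under eq_bigr do rewrite mulrBr; by rewrite sumrB subr_le0.
have := psumr_eq0P term_ge0 sum_eq0 (i := i) isT.
rewrite ffunE zi (negbTE yi) /bval /= subr0 mulr1 => /eqP.
by rewrite fmorph_eq0 (negbTE si).
Qed.

End Decomposition.

Theorem mainTheorem13 (R : realFieldType) (n : nat)
  (a : 'I_n -> 'I_n -> rat) (s : 'I_n -> rat)
  (ha : forall i j : 'I_n, (i < j)%N -> 0 <= a i j)
  (hs : forall i : 'I_n, 0 <= s i)
  (beta1 beta0 : R) (hb1 : 0 <= beta1) (hb10 : beta1 < beta0)
  (y z : {ffun 'I_n -> bool})
  (hy : forall x : {ffun 'I_n -> bool}, Phi a s beta1 y <= Phi a s beta1 x)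
  (hz : forall x : {ffun 'I_n -> bool}, Phi a s beta0 z <= Phi a s beta0 x) :
  Hset z :&: PiPhi s \subset Hset y :&: PiPhi s.
Proof.
have hle := minimizers_Phi_lin_le_and ha hb10 hy hz.
apply/subsetP => i; rewrite !inE => /andP [zi si]; rewrite si andbT.
exact: Phi_lin_le_and_support hs hle zi si.
Qed.
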